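(* Let $\langle \mathscr{A} \mid \mathscr{R} \rangle$ be a $C(4)$ equivalence presentation. Then the monoid presented is left cancellative if and only if $\mathscr{R}$ contains no relation of the form $(ar, as)$ where $a \in \mathscr{A}$ and $r, s \in \mathscr{A}^*$ with $r \neq s$.
   Context: A monoid presentation $\langle \mathscr{A} \mid \mathscr{R} \rangle$ consists of an alphabet $\mathscr{A}$ and a set $\mathscr{R} \subseteq \mathscr{A}^* \times \mathscr{A}^*$ of relations; the monoid presented is $\mathscr{A}^*$ modulo the smallest congruence containing $\mathscr{R}$. A relation word is a word occurring as one side of a relation. A piece is a word which occurs as a factor of two distinct relation words, or in two different (possibly overlapping) positions within one relation word; the empty word is always a piece. The presentation is $C(n)$ if no relation word can be written as a product of strictly fewer than $n$ pieces. It is an equivalence presentation if $\mathscr{R}$ is an equivalence relation on the set of relation words (reflexive on relation words, symmetric and transitive). *)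

From mathcomp Require Import all_boot.
Set Implicit Arguments. Unset Strict Implicit. Unset Printing Implicit Defensive.

(* A presentation <A | R> is given by an alphabet (any eqType A) and a
   (possibly infinite) set of relations R, a Prop-valued relation on words. *)
Definition presentation (A : eqType) := seq A -> seq A -> Prop.

Definition rel_word (A : eqType) (R : presentation A) (w : seq A) : Prop :=
  exists v, R w v \/ R v w.

Definition occurs_at (A : eqType) (p r : seq A) (i : nat) : Prop :=
  exists x y, r = x ++ p ++ y /\ size x = i.

Definition piece (A : eqType) (R : presentation A) (p : seq A) : Prop :=
  p = [::] \/
  exists r1 r2 i j, rel_word R r1 /\ rel_word R r2 /\
    occurs_at p r1 i /\ occurs_at p r2 j /\ (r1 <> r2 \/ i <> j).

Definition C_cond (A : eqType) (R : presentation A) (n : nat) : Prop :=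
  forall r, rel_word R r ->
    ~ (exists ps : seq (seq A),
         size ps < n /\ (forall q, q \in ps -> piece R q) /\ flatten ps = r).

Definition equivalence_presentation (A : eqType) (R : presentation A) : Prop :=
  (forall w, rel_word R w -> R w w) /\
  (forall u v, R u v -> R v u) /\
  (forall u v w, R u v -> R v w -> R u w).

Inductive cong (A : eqType) (R : presentation A) : seq A -> seq A -> Prop :=
| cong_step u v x y : R x y -> cong R (u ++ x ++ v) (u ++ y ++ v)
| cong_refl w : cong R w w
| cong_sym u v : cong R u v -> cong R v u
| cong_trans u v w : cong R u v -> cong R v w -> cong R u w.

Definition left_cancellative (A : eqType) (R : presentation A) : Prop :=
  forall w u v, cong R (w ++ u) (w ++ v) -> cong R u v.

From mathcomp Require Import all_boot.

Set Implicit Arguments. Unset Strict Implicit. Unset Printing Implicit Defensive.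

(* Prove two statements together, by strong induction on a bound n for the
   length of derivations.  Invariant: if y is a relation word, every word
   derived from y b has the form z g, where z q is a relation word equivalent
   to y, q is a piece and q b derives g.  By small cancellation a rewrite
   meeting z either replaces a whole relation word equivalent to y, which
   transitivity of R absorbs, or merges with q into a longer piece.
   Cancelling a first letter a: a rewrite at the front of a u replaces a
   relation word a x, the invariant shows that a v starts with a prefix a z of
   a relation word a z q equivalent to a x, and the hypothesis on R forces
   x = z q.  Only C(3) is needed.  Conversely, no relation word is a factor of
   a proper suffix r of a relation word a r, so r is alone in its class. *)

Section Rewriting.

Variables (A : eqType) (R : presentation A).

Definition rstep (w w' : seq A) : Prop :=
  exists u v x y, [/\ R x y, w = u ++ x ++ v & w' = u ++ y ++ v].

(* [rsteps w n w'] : w rewrites to w' in at most n steps. *)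
Inductive rsteps (w : seq A) : nat -> seq A -> Prop :=
| rsteps_refl n : rsteps w n w
| rsteps_step n w1 w2 : rsteps w n w1 -> rstep w1 w2 -> rsteps w n.+1 w2.

Lemma rsteps_leq w n w' m : rsteps w n w' -> n <= m -> rsteps w m w'.
Proof.
move=> H; elim: H m => {n w'} [n|n w1 w2 _ IH Hs] m; first by constructor.
by case: m => [//|m] Hm; apply: rsteps_step (IH m Hm) Hs.
Qed.

Lemma rstep_rsteps w w1 n w2 : rstep w w1 -> rsteps w1 n w2 -> rsteps w n.+1 w2.
Proof.
move=> Hs; elim=> {n w2} [n|n w2 w3 _ IH Hs2].
- exact: rsteps_step (rsteps_refl _ _) Hs.
- exact: rsteps_step IH Hs2.
Qed.

Lemma rstepsP w n w' :
  rsteps w n w' -> w = w' \/ exists k w1, [/\ n = k.+1, rstep w w1 & rsteps w1 k w'].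
Proof.
elim=> {n w'} [n|n w1 w2 _ IH Hs]; first by left.
right; case: IH => [->|[k [w' [-> Hs' H']]]].
- by exists n, w2; split => //; constructor.
- by exists k.+1, w'; split => //; apply: rsteps_step H' Hs.
Qed.

Lemma rsteps_trans w1 m w2 n w3 :
  rsteps w1 m w2 -> rsteps w2 n w3 -> rsteps w1 (m + n) w3.
Proof.
move=> H1; elim=> {n w3} [n|n w3 w4 _ IH Hs].
- exact: rsteps_leq H1 (leq_addr _ _).
- by rewrite addnS; apply: rsteps_step IH Hs.
Qed.

Lemma rsteps_catl p w n w' : rsteps w n w' -> rsteps (p ++ w) n (p ++ w').
Proof.
elim=> {n w'} [n|n w1 w2 _ IH [u [v [x [y [Rxy E1 ->]]]]]]; first by constructor.
by apply: rsteps_step IH _; exists (p ++ u), v, x, y; rewrite E1 !catA.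
Qed.

Lemma rsteps_cong w n w' : rsteps w n w' -> cong R w w'.
Proof.
elim=> {n w'} [n|n w1 w2 _ IH [u [v [x [y [Rxy E1 ->]]]]]]; first exact: cong_refl.
by apply: cong_trans IH _; rewrite E1; apply: cong_step.
Qed.

Hypothesis R_sym : forall u v, R u v -> R v u.

Lemma rsteps_sym w n w' : rsteps w n w' -> rsteps w' n w.
Proof.
elim=> {n w'} [n|n w1 w2 _ IH [u [v [x [y [Rxy E1 ->]]]]]]; first by constructor.
by apply: rstep_rsteps IH; exists u, v, y, x; rewrite E1; split => //; apply: R_sym.
Qed.

Lemma cong_rsteps w w' : cong R w w' -> exists n, rsteps w n w'.
Proof.
elim=> {w w'} [u v x y Rxy|w|u v _ [n Hn]|u v w _ [m Hm] _ [n Hn]].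
- by exists 1; apply: rsteps_step (rsteps_refl _ 0) _; exists u, v, x, y.
- by exists 0; constructor.
- by exists n; apply: rsteps_sym.
- by exists (m + n); apply: rsteps_trans Hm Hn.
Qed.

End Rewriting.

Lemma cat_eq_cat (T : Type) (x1 y1 x2 y2 : seq T) :
  x1 ++ y1 = x2 ++ y2 ->
  (exists m, x2 = x1 ++ m /\ y1 = m ++ y2) \/ (exists m, x1 = x2 ++ m /\ y2 = m ++ y1).
Proof.
elim: x1 x2 => [|a x1 IH] x2 /= e; first by left; exists x2.
case: x2 e => [|b x2] /= e; first by right; exists (a :: x1).
by case: e => -> /IH [[m [-> ->]]|[m [-> ->]]]; [left | right]; exists m.
Qed.

Section SmallCancellation.

Variables (A : eqType) (R : presentation A).

Lemma C_cond_le m n : m <= n -> C_cond R n -> C_cond R m.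
Proof.
move=> le_mn Cn r Hr [ps [Hps HpEr]]; apply: (Cn r Hr).
by exists ps; split => //; apply: leq_trans Hps le_mn.
Qed.

Lemma R_rel_words x y : R x y -> rel_word R x /\ rel_word R y.
Proof. by move=> Rxy; split; [exists y; left | exists x; right]. Qed.

Lemma piece_occurrences r1 r2 x1 y1 x2 y2 p :
  rel_word R r1 -> rel_word R r2 -> r1 = x1 ++ p ++ y1 -> r2 = x2 ++ p ++ y2 ->
  r1 <> r2 \/ size x1 <> size x2 -> piece R p.
Proof.
move=> H1 H2 E1 E2 Hd; right; exists r1, r2, (size x1), (size x2).
by do !split => //; [exists x1, y1 | exists x2, y2].
Qed.

Hypothesis C3 : C_cond R 3.

Lemma rel_word_neq_nil r : rel_word R r -> r <> [::].
Proof. by move=> Hr Er; apply: (C3 Hr); exists [::]. Qed.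

Lemma rel_word_not_piece r : rel_word R r -> ~ piece R r.
Proof.
move=> Hr Hp; apply: (C3 Hr); exists [:: r]; rewrite /= cats0; split => //.
by split => // q; rewrite inE => /eqP ->.
Qed.

Lemma rel_word_not_two_pieces r p1 p2 :
  rel_word R r -> piece R p1 -> piece R p2 -> r <> p1 ++ p2.
Proof.
move=> Hr H1 H2 Er; apply: (C3 Hr); exists [:: p1; p2]; rewrite /= cats0; split => //.
by split => // q; rewrite !inE => /orP[] /eqP ->.
Qed.

Lemma rel_word_factor t y x s :
  rel_word R t -> rel_word R y -> y = x ++ t ++ s -> x = [::] /\ s = [::].
Proof.
move=> Ht Hy Ey; have Et : t = [::] ++ t ++ [::] by rewrite cats0.
have [Ex | Nx] := eqVneq x [::]; last first.
  case: (rel_word_not_piece Ht); apply: piece_occurrences Ht Hy Et Ey (or_intror _).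
  by move=> /esym /size0nil; apply/eqP.
have [Ety | Nty] := eqVneq t y.
  split=> //; move: Ey; rewrite Ex -Ety -{1}[t]cats0 => /(congr1 (drop (size t))).
  by rewrite /= !drop_size_cat // => <-.
by case: (rel_word_not_piece Ht); apply: piece_occurrences Ht Hy Et Ey (or_introl _); apply/eqP.
Qed.

Lemma cong_rel_word_suffix a r w : rel_word R (a :: r) -> cong R r w -> w = r.
Proof.
move=> Har; suff fixr u v : cong R u v -> (u = r <-> v = r) by move/fixr=> [-> //].
elim=> {u v} [u v x y Rxy|//|u v _ [] //|u v w0 _ [H1 H2] _ [H3 H4]]; last by split; auto.
have [Hx Hy] := R_rel_words Rxy.
split=> E.
- by have := rel_word_factor (x := a :: u) (s := v) Hx Har; rewrite -E => /(_ erefl) [].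
- by have := rel_word_factor (x := a :: u) (s := v) Hy Har; rewrite -E => /(_ erefl) [].
Qed.

Hypotheses (R_refl : forall w, rel_word R w -> R w w)
           (R_sym : forall u v, R u v -> R v u)
           (R_trans : forall u v w, R u v -> R v w -> R u w).

Definition prefix_split (y b : seq A) (n : nat) (w : seq A) : Prop :=
  exists y' z q g,
    [/\ R y y', y' = z ++ q, w = z ++ g, piece R q & rsteps R (q ++ b) n g].

Definition prefix_stable n : Prop :=
  forall y b w, rel_word R y -> rsteps R (y ++ b) n w -> prefix_split y b n w.

Definition lcancel_within n : Prop :=
  forall (a : A) u v, rsteps R (a :: u) n (a :: v) -> rsteps R u n v.

Lemma lcancel_within_cat n p u v :
  lcancel_within n -> rsteps R (p ++ u) n (p ++ v) -> rsteps R u n v.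
Proof. by move=> Hcan; elim: p => [|a p IH] //= /Hcan /IH. Qed.

Lemma prefix_split_whole y y' b n g :
  R y y' -> rsteps R b n g -> prefix_split y b n (y' ++ g).
Proof. by move=> Ryy' Hg; exists y', y', [::], g; rewrite cats0; split => //; left. Qed.

Lemma proper_suffix_piece m y t al p b de :
  prefix_stable m -> rel_word R y -> rel_word R t -> al != [::] -> y = al ++ p ->
  rsteps R (t ++ de) m (p ++ b) -> piece R p.
Proof.
move=> stable Hy Ht Nal Ey /(stable _ _ _ Ht) [t' [z [q [g [Rtt' Et' Ez Pq _]]]]].
have Ht' := (R_rel_words Rtt').2.
have Hal : size (@nil A) <> size al by move=> /esym /size0nil /eqP; rewrite (negPf Nal).
case: (cat_eq_cat Ez) => [[m3 [Ez' _]] | [m3 [Ep _]]].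
  apply: (piece_occurrences (x1 := [::]) (y1 := m3 ++ q) (y2 := [::]) Ht' Hy _ _ (or_intror Hal)).
    by rewrite Et' Ez' -catA.
  by rewrite Ey cats0.
have Pz : piece R z.
  apply: (piece_occurrences (x1 := [::]) (y2 := m3) Ht' Hy Et' _ (or_intror Hal)).
  by rewrite Ey Ep.
by case: (rel_word_not_two_pieces Ht' Pz Pq).
Qed.

Lemma prefix_split_step m y b w1 w2 :
  prefix_stable m -> lcancel_within m ->
  prefix_split y b m w1 -> rstep R w1 w2 -> prefix_split y b m.+1 w2.
Proof.
move=> stable can [y' [z [q [g [Ryy' Ey' -> Pq Hg]]]]] [al [de [t [t' [Rtt' Ew1 ->]]]]].
have [Ht _] := R_rel_words Rtt'; have Hy' := (R_rel_words Ryy').2.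
have Ryt' : y' = t -> R y t' by move=> Ey't; apply: R_trans Ryy' _; rewrite Ey't.
(* The redex t lies in g, or inside z (and then is y' itself), or starts in z
   and ends in g: at the front of y' it is y' (C(3)), further in m1 q is a piece. *)
case: (cat_eq_cat Ew1) => [[m1 [-> Eg]] | [m1 [Ez /cat_eq_cat [[m2 [Em1 Ede]] | [t2 [Et Eg]]]]]].
- exists y', z, q, (m1 ++ t' ++ de); rewrite -catA; split => //.
  by apply: rsteps_step Hg _; exists m1, de, t, t'; rewrite Eg.
- have Ey't : y' = al ++ t ++ m2 ++ q by rewrite Ey' Ez Em1 -!catA.
  have [Eal Em2q] := rel_word_factor Ht Hy' Ey't.
  have : nilp (m2 ++ q) by rewrite Em2q.
  rewrite cat_nilp => /andP[/nilP Em2 /nilP Eq].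
  rewrite Eq in Hg; rewrite Eal Ede Em2.
  apply: prefix_split_whole (rsteps_leq Hg (leqnSn m)).
  by apply: Ryt'; rewrite Ey't Eal Em2 Eq /= cats0.
have [Eal | Nal] := eqVneq al [::].
  have [Ey't | Ny't] := eqVneq y' t.
    have Et2 : t2 = q.
      have Em1 : m1 ++ t2 = m1 ++ q by rewrite -Et -Ey't Ey' Ez Eal.
      by move/(congr1 (drop (size m1))): Em1; rewrite !drop_size_cat.
    rewrite Eal /=; apply: prefix_split_whole (Ryt' Ey't) (rsteps_leq _ (leqnSn m)).
    by apply: (lcancel_within_cat (p := q)) can _; rewrite -{2}Et2 -Eg.
  have Pm1 : piece R m1.
    apply: (piece_occurrences (x1 := [::]) (x2 := [::]) (y2 := q) Ht Hy' Et _ (or_introl _)).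
      by rewrite Ey' Ez Eal.
    by apply/eqP; rewrite eq_sym.
  by case: (rel_word_not_two_pieces Hy' Pm1 Pq); rewrite Ey' Ez Eal.
have Hm : rsteps R ((m1 ++ q) ++ b) m (t ++ de).
  by rewrite Et -!catA -Eg; apply: rsteps_catl.
have Ey'al : y' = al ++ m1 ++ q by rewrite Ey' Ez -catA.
exists y', al, (m1 ++ q), (t' ++ de); split => //.
- exact: proper_suffix_piece stable Hy' Ht Nal Ey'al (rsteps_sym R_sym Hm).
- by apply: rsteps_step Hm _; exists [::], de, t, t'.
Qed.

Lemma prefix_stable_lt n :
  (forall k, k < n -> prefix_stable k /\ lcancel_within k) -> prefix_stable n.
Proof.
move=> IH y b w Hy.
suff split_within m w' : rsteps R (y ++ b) m w' -> m <= n -> prefix_split y b m w'.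
  by move/split_within; apply.
elim=> {m w'} [m|m w1 w2 _ IHd Hs] Hmn.
  by apply: prefix_split_whole (R_refl Hy) _; constructor.
have [stable can] := IH m Hmn.
exact: prefix_split_step stable can (IHd (ltnW Hmn)) Hs.
Qed.

Hypothesis R_cancel_head : forall (a : A) r s, R (a :: r) (a :: s) -> r = s.

Lemma lcancel_within_lt n :
  (forall k, k < n -> prefix_stable k /\ lcancel_within k) -> lcancel_within n.
Proof.
move=> IH a u v /rstepsP [[->] | [k [w1 [En Hs H1]]]]; first by constructor.
have [stable can] : prefix_stable k /\ lcancel_within k by apply: IH; rewrite En.
rewrite En; case: Hs => [[|c al] [de [x [y [Rxy /= E1 E2]]]]]; last first.
  case: E1 => Eca ->; rewrite E2 -Eca /= in H1.
  by apply: rstep_rsteps (can _ _ _ H1); exists al, de, x, y.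
case: x Rxy E1 => [|c x] Rxy E1; first by case: (rel_word_neq_nil (R_rel_words Rxy).1).
case: E1 => Eca ->; rewrite -Eca in Rxy; rewrite E2 /= in H1.
have [y' [z [q [g [Ryy' Ey' Ez Pq Hg]]]]] := stable _ _ _ (R_rel_words Rxy).2 H1.
have Hy' := (R_rel_words Ryy').2.
case: z Ey' Ez => [|d z] Ey' Ez; first by case: (rel_word_not_piece Hy'); rewrite Ey'.
case: Ez => Eda ->; rewrite Ey' -Eda /= in Ryy'.
rewrite (R_cancel_head (R_trans Rxy Ryy')) -catA.
exact: rsteps_leq (rsteps_catl z Hg) (leqnSn k).
Qed.

Lemma lcancel_within_all n : lcancel_within n.
Proof.
suff: prefix_stable n /\ lcancel_within n by case.
elim/ltn_ind: n => n IH.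
by split; [apply: prefix_stable_lt | apply: lcancel_within_lt].
Qed.

Lemma cancel_head_left_cancellative : left_cancellative R.
Proof.
move=> w u v /(cong_rsteps R_sym) [n Hn].
exact: rsteps_cong (lcancel_within_cat (@lcancel_within_all n) Hn).
Qed.

End SmallCancellation.

Theorem theorem5 (A : eqType) (R : presentation A) :
  equivalence_presentation R -> C_cond R 4 ->
  (left_cancellative R <->
   ~ (exists (a : A) (r s : seq A), r <> s /\ R (a :: r) (a :: s))).
Proof.
move=> [R_refl [R_sym R_trans]] /(C_cond_le (isT : 3 <= 4)) C3; split.
- move=> LC [a [r [s [Nrs Rrs]]]]; apply: Nrs.
  have Ears : cong R ([:: a] ++ r) ([:: a] ++ s).
    by have := cong_step [::] [::] Rrs; rewrite !cats0.
  by rewrite (cong_rel_word_suffix C3 (R_rel_words Rrs).1 (LC _ _ _ Ears)).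
- move=> noRel; apply: (cancel_head_left_cancellative C3 R_refl R_sym R_trans).
  move=> a r s Rrs; case: (eqVneq r s) => // /eqP Nrs.
  by case: noRel; exists a, r, s.
Qed.
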